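(* Let $q$ be a prime power, $s,\ell$ positive integers with $q\equiv 1\pmod{\ell}$, and let $\alpha\in\{1,-1\}\subseteq\mathbb{F}_q$. Assume $\gcd(s,q)=1$, and that $s$ is odd if $\alpha=-1$. Then no two-dimensional $(\alpha,1)$-constacyclic code of length $s.\ell$ over $\mathbb{F}_q$, i.e. no ideal $\mathcal{C}$ of $\mathbb{F}_q[x,y]/\langle x^s-\alpha,\,y^\ell-1\rangle$, is self-dual.
   Context: Elements of $\mathbb{F}_q[x,y]/\langle x^s-\alpha,y^\ell-1\rangle$ are identified with vectors $(c_{i,j})$ of length $s\ell$ via the coefficients of $x^iy^j$ ($0\le i\le s-1$, $0\le j\le\ell-1$). Self-dual means $\mathcal{C}=\mathcal{C}^\perp$ with respect to the Euclidean inner product $\sum_{i,j}c_{i,j}d_{i,j}$. *)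

From HB Require Import structures.
From mathcomp Require Import all_boot all_order all_algebra all_field.
Set Implicit Arguments. Unset Strict Implicit. Unset Printing Implicit Defensive.
Import GRing.Theory.
Local Open Scope ring_scope.

(* Elements of F[x,y]/<x^s - alpha, y^l - 1> are represented by their
   coefficient arrays c : 'M[F]_(s,l), c i j = coefficient of x^i y^j. *)

(* Multiplication in F[x,y]/<x^s - alpha, y^l - 1>:
   x^i1 y^j1 * x^i2 y^j2 = alpha^((i1+i2)/s) x^((i1+i2) mod s) y^((j1+j2) mod l). *)
Definition cmul (F : fieldType) (s l : nat) (alpha : F)
    (c d : 'M[F]_(s, l)) : 'M[F]_(s, l) :=
  \matrix_(i < s, j < l)
    \sum_(i1 < s) \sum_(j1 < l) \sum_(i2 < s) \sum_(j2 < l)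
      (if ((i1 + i2) %% s == i)%N && ((j1 + j2) %% l == j)%N
       then alpha ^+ ((i1 + i2) %/ s) * c i1 j1 * d i2 j2 else 0).

Definition is_ideal (F : fieldType) (s l : nat) (alpha : F)
    (C : 'M[F]_(s, l) -> Prop) : Prop :=
  [/\ C 0,
      (forall c d, C c -> C d -> C (c + d)),
      (forall c, C c -> C (- c)) &
      (forall r c, C c -> C (cmul alpha r c))].

Definition edot (F : fieldType) (s l : nat) (c d : 'M[F]_(s, l)) : F :=
  \sum_(i < s) \sum_(j < l) c i j * d i j.

Definition dual (F : fieldType) (s l : nat) (C : 'M[F]_(s, l) -> Prop)
    : 'M[F]_(s, l) -> Prop :=
  fun d => forall c, C c -> edot c d = 0.

Definition self_dual (F : fieldType) (s l : nat) (C : 'M[F]_(s, l) -> Prop)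
    : Prop :=
  forall d, C d <-> dual C d.

From HB Require Import structures.
From mathcomp Require Import all_boot all_order all_algebra all_field.
From mathcomp Require Import fingroup cyclic.
(* The element u = sum_(i,j) alpha^i x^i y^j is an eigenvector of multiplication by x
   (eigenvalue alpha, using alpha^2 = 1 and alpha^s = alpha) and by y (eigenvalue 1),
   so c * u = <c, u> u for every c.  Moreover <u, u> = s l is nonzero in F.  Hence an
   ideal C either contains some c with <c, u> != 0, and then u itself, which is not
   self-orthogonal; or C is orthogonal to u, and then u lies in the dual of C but not
   in C. *)

Set Implicit Arguments.
Unset Strict Implicit.
Unset Printing Implicit Defensive.

Import GRing.Theory.
Local Open Scope ring_scope.

Lemma natr_card (R : finNzRingType) : #|R|%:R = 0 :> R.
Proof. by have := expg_cardG (in_setT (1 : R)); rewrite cardsT. Qed.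

Lemma natr_coprime_card_neq0 (R : finNzRingType) n :
  coprime n #|R| -> n%:R != 0 :> R.
Proof.
move=> co_n; have [n0 | n_gt0] := posnP n.
  move: co_n; rewrite n0 /coprime gcd0n => /eqP card1.
  by have := card_finNzRing_gt1 R; rewrite card1.
case: (Bezoutl #|R| n_gt0) => a _ /dvdnP[k]; rewrite (eqP co_n) => Ek.
apply/eqP => nR0; have := congr1 (fun m => m%:R : R) Ek.
by rewrite /= natrD !natrM natr_card nR0 !mulr0 addr0 => /eqP; rewrite oner_eq0.
Qed.

Lemma sum_addn_modn_eq (V : nmodType) n (a i : 'I_n) (v : V) :
  \sum_(b < n) (if ((b + a) %% n == i)%N then v else 0) = v.
Proof.
have n_gt0 : (0 < n)%N by case: n a {i} => [[]|].
pose h (b : 'I_n) := Ordinal (ltn_pmod (b + a) n_gt0).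
have h_inj : injective h.
  by move=> b c /(congr1 val) /eqP; rewrite /= eqn_modDr !modn_small // => /eqP /val_inj.
rewrite -big_mkcond (big_pred1 (invF h_inj i)) // => b /=.
by rewrite -(inj_eq h_inj) f_invF -(inj_eq val_inj).
Qed.

Section GeometricVector.

Variables (F : fieldType) (s l : nat) (alpha : F).
Hypotheses (alpha2 : alpha ^+ 2 = 1) (alphaS : alpha ^+ s = alpha).

Definition geom_mx : 'M[F]_(s, l) := \matrix_(i < s, j < l) alpha ^+ i.

Lemma expr_sqr1 n : alpha ^+ n * alpha ^+ n = 1.
Proof. by rewrite -exprD addnn -mul2n exprM alpha2 expr1n. Qed.

Lemma expr_divn_modn i1 i2 :
  alpha ^+ ((i1 + i2) %/ s) * alpha ^+ i1 = alpha ^+ ((i1 + i2) %% s) * alpha ^+ i2.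
Proof.
have := divn_eq (i1 + i2) s; set q := (_ %/ s)%N; set r := (_ %% s)%N => def_i1i2.
rewrite -!exprD -[LHS]mulr1 -(expr_sqr1 i2) mulrA -exprD -addnA def_i1i2.
by rewrite addnA !exprD mulnC exprM alphaS expr_sqr1 mul1r.
Qed.

Lemma cmulZl k (r c : 'M[F]_(s, l)) : cmul alpha (k *: r) c = k *: cmul alpha r c.
Proof.
apply/matrixP => i j; rewrite !mxE.
do 4![rewrite mulr_sumr; apply: eq_bigr => ? _].
by case: ifP; rewrite ?mulr0 // mxE mulrCA !mulrA.
Qed.

Lemma cmul_geom c : cmul alpha geom_mx c = edot c geom_mx *: geom_mx.
Proof.
apply/matrixP => i j; rewrite !mxE /edot mulr_suml.
under eq_bigr do rewrite exchange_big; rewrite exchange_big.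
under eq_bigr do under eq_bigr do rewrite exchange_big.
under eq_bigr do rewrite exchange_big.
apply: eq_bigr => i2 _; rewrite mulr_suml; apply: eq_bigr => j2 _.
rewrite -[RHS](sum_addn_modn_eq i2 i); apply: eq_bigr => i1 _.
case: eqP => [def_i | _]; last by rewrite big1.
rewrite -[RHS](sum_addn_modn_eq j2 j); apply: eq_bigr => j1 _.
case: eqP => // _; rewrite !mxE -def_i expr_divn_modn.
by rewrite mulrC [X in _ * X]mulrC mulrA.
Qed.

Lemma edot_geom : edot geom_mx geom_mx = (s * l)%:R.
Proof.
rewrite /edot; under eq_bigr do under eq_bigr do rewrite !mxE expr_sqr1.
by under eq_bigr do rewrite sumr_const card_ord; rewrite sumr_const card_ord -mulrnA mulnC.
Qed.

Lemma ideal_not_self_dual (C : 'M[F]_(s, l) -> Prop) :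
  (s * l)%:R != 0 :> F -> is_ideal alpha C -> ~ self_dual C.
Proof.
move=> sl_neq0 [_ _ _ C_mul] C_sd.
have geom_notin_C : ~ C geom_mx.
  move=> C_geom; have := (C_sd geom_mx).1 C_geom geom_mx C_geom.
  by rewrite edot_geom; apply/eqP.
apply: (geom_notin_C); apply/C_sd => c Cc; apply/eqP/contraT => c_geom_neq0.
case: geom_notin_C; have := C_mul ((edot c geom_mx)^-1 *: geom_mx) c Cc.
by rewrite cmulZl cmul_geom scalerA mulVf // scale1r.
Qed.

End GeometricVector.

Theorem theorem5 (F : finFieldType) (s l : nat) (alpha : F) :
  (0 < s)%N -> (0 < l)%N ->
  (l %| #|F| - 1)%N ->
  (alpha = 1 \/ alpha = -1) ->
  coprime s #|F| ->
  (alpha = -1 -> odd s) ->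
  forall C : 'M[F]_(s, l) -> Prop,
    is_ideal alpha C -> ~ self_dual C.
Proof.
(* Positivity of [s] and [l] follows from the coprimality and divisibility hypotheses. *)
move=> _ _ l_dvd alpha_pm1 s_coprime alpha_odd C.
apply: ideal_not_self_dual.
- by case: alpha_pm1 => ->; rewrite ?sqrrN expr1n.
- case: alpha_pm1 => [-> | alphaN1]; first by rewrite expr1n.
  by rewrite alphaN1 -signr_odd (alpha_odd alphaN1) expr1.
have l_coprime : coprime l #|F|.
  apply: coprime_dvdl l_dvd _; rewrite subn1.
  by have := coprimenS #|F|.-1; rewrite prednK // ltnW // card_finNzRing_gt1.
by rewrite natrM mulf_neq0 // natr_coprime_card_neq0.
Qed.
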